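(* Let $M$ be a matroid on $E$ whose dual is transversal with presentation $\mathcal A=(A_1,\ldots,A_r)$, $r=r^*(M)$, and let $e\in E$. Let $X\subseteq E-e$. Then $$r_{M\backslash e}(X)\le |X|-|\mathcal A(X)|-\max\{|\mathcal A_e(X\cup\{e\})|-1,\,0\},$$ with equality if $X$ is a cyclic flat of $M\backslash e$.
   Context: $M^*=M[\mathcal A]$, the transversal matroid whose independent sets are the partial transversals of $\mathcal A$; $r^*(M)$ is the rank of $M^*$. For $Y\subseteq E$: $\mathcal A(Y)=\{i\in[r]:A_i\subseteq Y\}$ and $\mathcal A_e(Y)=\{i\in\mathcal A(Y): e\in A_i\}$. A cyclic flat is a flat that is a union of circuits. *)

From mathcomp Require Import all_boot all_order.
Set Implicit Arguments. Unset Strict Implicit. Unset Printing Implicit Defensive.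

Section Matroids.
Variable T : finType.

Definition matroid_axioms (E : {set T}) (ind : {set T} -> bool) : Prop :=
  [/\ ind set0,
      (forall I : {set T}, ind I -> I \subset E),
      (forall I J : {set T}, J \subset I -> ind I -> ind J)
    & (forall I J : {set T}, ind I -> ind J -> #|I| < #|J| ->
         exists2 x, x \in J :\: I & ind (x |: I))].

Definition mrank (ind : {set T} -> bool) (X : {set T}) : nat :=
  \max_(I : {set T} | (I \subset X) && ind I) #|I|.

Definition mbasis (E : {set T}) (ind : {set T} -> bool) (B : {set T}) : bool :=
  ind B && [forall x in E :\: B, ~~ ind (x |: B)].

Definition dual_indep (E : {set T}) (ind : {set T} -> bool) (I : {set T}) : bool :=
  (I \subset E) && [exists B : {set T}, mbasis E ind B && [disjoint I & B]].

Definition del_indep (ind : {set T} -> bool) (e : T) (I : {set T}) : bool :=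
  ind I && (e \notin I).

Definition mcircuit (E : {set T}) (ind : {set T} -> bool) (C : {set T}) : Prop :=
  [/\ C \subset E, ~~ ind C & forall x, x \in C -> ind (C :\ x)].

Definition mflat (E : {set T}) (ind : {set T} -> bool) (X : {set T}) : Prop :=
  X \subset E /\ forall y, y \in E :\: X -> mrank ind X < mrank ind (y |: X).

Definition mcyclic (E : {set T}) (ind : {set T} -> bool) (X : {set T}) : Prop :=
  forall x, x \in X -> exists C, [/\ mcircuit E ind C, x \in C & C \subset X].

Definition cyclic_flat (E : {set T}) (ind : {set T} -> bool) (X : {set T}) : Prop :=
  mflat E ind X /\ mcyclic E ind X.

Definition partial_transversal (r : nat) (A : 'I_r -> {set T}) (I : {set T}) : Prop :=
  exists f : T -> 'I_r, {in I &, injective f} /\ (forall x, x \in I -> x \in A (f x)).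

(* A(Y) = { i : A_i ⊆ Y } and A_e(Y) = { i ∈ A(Y) : e ∈ A_i } *)
Definition famA (r : nat) (A : 'I_r -> {set T}) (Y : {set T}) : {set 'I_r} :=
  [set i | A i \subset Y].
Definition famAe (r : nat) (A : 'I_r -> {set T}) (e : T) (Y : {set T}) : {set 'I_r} :=
  [set i | (A i \subset Y) && (e \in A i)].

End Matroids.

From mathcomp Require Import all_boot all_order.
From mathcomp Require Import zify.
Set Implicit Arguments. Unset Strict Implicit. Unset Printing Implicit Defensive.

(* Put Y = E - X.  The dual rank formula gives r(X) = |X| - r + r*(Y), and r splits as
   |A(X)| + |A_e(X + e)| + q, where q counts the A_i not contained in X + e.  Both claims
   are therefore about the rank r*(Y) of Y in the transversal matroid M[A]: it is at most
   q + [A_e(X + e) <> 0], with equality when X is a flat of M\e.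

   Upper bound: in a partial transversal of Y every element other than e is matched to an
   index counted by q, and e to such an index or to one in A_e(X + e).

   Lower bound: if X is a flat of M\e, no element of Y - e is a coloop of M[A]|Y.  Fix a
   maximum matching of Y.  Any element of Y lying in a set A_i whose index is reachable by
   an alternating path from an unmatched index is a coloop of M[A]|Y, hence equals e.  So
   every index counted by q is matched, and if some A_k in A_e(X + e) exists, one more
   index is matched: k itself, or the partner of e. *)

Section Rank.
Variable T : finType.
Implicit Types (P Q : {set T} -> bool) (X I : {set T}).

Lemma mrank_ge P X I : I \subset X -> P I -> #|I| <= mrank P X.
Proof.
move=> sIX PI; rewrite /mrank.
by apply: (@leq_bigmax_cond _ (fun J : {set T} => (J \subset X) && P J)); rewrite sIX.
Qed.

Lemma mrank_witness P X : P set0 ->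
  exists2 I : {set T}, (I \subset X) && P I & #|I| = mrank P X.
Proof.
move=> P0; have P0X : (set0 \subset X) && P set0 by rewrite sub0set P0.
rewrite /mrank (@bigmax_eq_arg _ set0 _ (fun I => #|I|) P0X).
by case: arg_maxnP => // I PI _; exists I.
Qed.

Lemma eq_mrank P Q : P =1 Q -> mrank P =1 mrank Q.
Proof. by move=> eqPQ X; apply: eq_bigl => I; rewrite eqPQ. Qed.

Lemma mrank_del P e X : e \notin X -> mrank (del_indep P e) X = mrank P X.
Proof.
move=> eX; apply: eq_bigl => I; rewrite /del_indep.
by case sIX: (I \subset X); rewrite //= (contra (subsetP sIX e) eX) andbT.
Qed.

End Rank.

Section Matroid.
Variables (T : finType) (E : {set T}) (ind : {set T} -> bool).
Hypothesis matroidM : matroid_axioms E ind.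
Implicit Types (X I J B S : {set T}).

Local Notation rk := (mrank ind).
Local Notation rkd := (mrank (dual_indep E ind)).

Lemma indep0 : ind set0. Proof. by case: matroidM. Qed.

Lemma indep_sub I : ind I -> I \subset E.
Proof. by case: matroidM => _ subE _ _; apply: subE. Qed.

Lemma indepS I J : J \subset I -> ind I -> ind J.
Proof. by case: matroidM => _ _ indS _; apply: indS. Qed.

Lemma indep_exchange I J : ind I -> ind J -> #|I| < #|J| ->
  exists2 x, x \in J :\: I & ind (x |: I).
Proof. by case: matroidM => _ _ _ exch; apply: exch. Qed.

Lemma indep_basis I : ind I -> exists2 B, mbasis E ind B & I \subset B.
Proof.
move=> indI; have II : (I \subset I) && ind I by rewrite subxx indI.
case: (@arg_maxnP _ I (fun B => (I \subset B) && ind B) (fun B => #|B|) II).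
move=> B /andP[sIB indB] maxB.
exists B => //; apply/andP; split=> //; apply/forall_inP => x /setDP[_ xB].
apply/negP => indxB; have := maxB (x |: B).
rewrite indxB (subset_trans sIB (subsetUr _ _)) cardsU1 xB => /(_ isT).
by rewrite /geq /= add1n ltnn.
Qed.

Lemma basis_leq_card B1 B2 : mbasis E ind B1 -> mbasis E ind B2 -> #|B1| <= #|B2|.
Proof.
move=> /andP[ind1 _] /andP[ind2 /forall_inP max2]; rewrite leqNgt.
apply/negP => /(indep_exchange ind2 ind1)[x /setDP[x1 x2] indx2].
by have := max2 x; rewrite inE x2 (subsetP (indep_sub ind1)) // indx2 => /(_ isT).
Qed.

Lemma dual_indep_cobasis B S :
  mbasis E ind B -> S \subset E :\: B -> dual_indep E ind S.
Proof.
move=> basB /subsetP sS; rewrite /dual_indep; apply/andP; split.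
  by apply/subsetP => x /sS /setDP[].
apply/existsP; exists B; rewrite basB disjoints_subset.
by apply/subsetP => x /sS /setDP[_ xB]; rewrite inE.
Qed.

Lemma card_cobasis B : mbasis E ind B -> #|E :\: B| = rkd E.
Proof.
move=> basB; apply/eqP; rewrite eqn_leq.
rewrite mrank_ge ?subsetDl ?(dual_indep_cobasis basB) //=.
apply/bigmax_leqP => S /andP[sSE /andP[_ /existsP[B' /andP[basB' disjSB']]]].
have sS : S \subset E :\: B' by rewrite setDE subsetI sSE -disjoints_subset.
apply: leq_trans (subset_leq_card sS) _.
have [/andP[/indep_sub sBE _] /andP[/indep_sub sB'E _]] := (basB, basB').
rewrite !cardsD (setIidPr sBE) (setIidPr sB'E) leq_sub2l //.
exact: basis_leq_card.
Qed.

Lemma dual_indep0 : dual_indep E ind set0.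
Proof.
have [B basB _] := indep_basis indep0.
by apply: (dual_indep_cobasis basB); rewrite sub0set.
Qed.

Lemma mrank_dual_le X : X \subset E -> rkd (E :\: X) + #|X| <= rk X + rkd E.
Proof.
move=> sXE; have [S /andP[sS dualS] <-] := mrank_witness (E :\: X) dual_indep0.
case/andP: dualS => _ /existsP[B /andP[basB disjSB]].
have /andP[indB _] := basB.
have rkXB : #|X :&: B| <= rk X by rewrite mrank_ge ?subsetIl ?(indepS (subsetIr _ _)).
have disjS : S :&: (X :\: B) = set0.
  apply/setP => x; rewrite !inE; case xS: (x \in S) => //=.
  by move: (subsetP sS x xS); rewrite inE => /andP[/negbTE ->]; rewrite andbF.
have sSXB : S :|: (X :\: B) \subset E :\: B.
  rewrite subUset setSD // andbT setDE subsetI -disjoints_subset disjSB.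
  by rewrite (subset_trans sS) ?subsetDl.
have := subset_leq_card sSXB; rewrite card_cobasis // cardsU disjS cards0 subn0.
by have := cardsID B X; lia.
Qed.

Lemma mrank_dual_ge X : X \subset E -> rk X + rkd E <= rkd (E :\: X) + #|X|.
Proof.
move=> sXE; have [I /andP[sIX indI] <-] := mrank_witness X indep0.
have [B basB sIB] := indep_basis indI.
have rkYS : #|(E :\: B) :\: X| <= rkd (E :\: X).
  by rewrite mrank_ge ?setSD ?subsetDl ?(dual_indep_cobasis basB) ?subsetDl.
have cobX : #|(E :\: B) :&: X| <= #|X :\: I|.
  apply: subset_leq_card; apply/subsetP => x; rewrite !inE => /andP[/andP[xB _] ->].
  by rewrite andbT; apply: contra xB => /(subsetP sIB).
rewrite -(card_cobasis basB) -(cardsID X (E :\: B)).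
by have := cardsID I X; rewrite (setIidPr sIX); lia.
Qed.

Lemma mrank_dual X : X \subset E -> rkd (E :\: X) + #|X| = rk X + rkd E.
Proof. by move=> sXE; apply/eqP; rewrite eqn_leq mrank_dual_le ?mrank_dual_ge. Qed.

Lemma mrank_dual_setD1 X y : X \subset E -> y \in E :\: X ->
  rk X < rk (y |: X) -> rkd (E :\: X) <= rkd ((E :\: X) :\ y).
Proof.
move=> sXE /setDP[yE yX] ltXyX.
have syXE : y |: X \subset E by rewrite subUset sub1set yE.
have <- : E :\: (y |: X) = (E :\: X) :\ y by rewrite setDDl setUC.
have := mrank_dual syXE; rewrite cardsU1 yX.
by have := mrank_dual sXE; lia.
Qed.

End Matroid.

Lemma path_sub_target (U : Type) (e e' : rel U) (P : pred U) x p :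
  (forall a b, P b -> e a b -> e' a b) -> all P p -> path e x p -> path e' x p.
Proof.
move=> ee'; elim: p x => //= b p IH x /andP[Pb Pp] /andP[eb pb].
by rewrite ee' ?IH.
Qed.

Section Transversal.
Variables (T : finType) (r : nat) (A : 'I_r -> {set T}).
Implicit Types (E X Y S U D : {set T}) (h g : T -> 'I_r) (e : T).

Definition partial_transversalb S : bool :=
  [exists f : {ffun T -> 'I_r}, [forall x in S, x \in A (f x)] &&
     [forall x in S, forall y in S, (f x == f y) ==> (x == y)]].

Definition matching S h : Prop :=
  {in S &, injective h} /\ (forall x, x \in S -> x \in A (h x)).

Lemma partial_transversalP S : reflect (partial_transversal A S) (partial_transversalb S).
Proof.
apply: (iffP existsP) => [[f /andP[/forall_inP fA /forall_inP finj]]|[h [hinj hA]]].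
  exists f; split=> [x y xS yS fxy|//]; apply/eqP.
  by move: (finj x xS) => /forall_inP/(_ y yS)/implyP; apply; apply/eqP.
exists (finfun h); apply/andP; split; apply/forall_inP => x xS; rewrite ffunE.
  exact: hA.
by apply/forall_inP => y yS; rewrite ffunE; apply/implyP => /eqP/hinj->.
Qed.

Lemma partial_transversal0 (i : 'I_r) : partial_transversalb set0.
Proof. by apply/partial_transversalP; exists (fun=> i); split=> // x; rewrite inE. Qed.

Lemma mrank_transversal_le X Y e : [disjoint Y & X] ->
  mrank partial_transversalb Y <= #|~: famA A (e |: X)| + (famAe A e (e |: X) != set0).
Proof.
move=> disjYX; apply/bigmax_leqP => S /andP[sSY /partial_transversalP[h [hinj hA]]].
set Q := ~: famA A (e |: X).
have outside x : x \in S -> x != e -> h x \in Q.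
  move=> xS xe; rewrite in_setC inE; apply/subsetPn; exists x; first exact: hA.
  by rewrite !inE negb_or xe (disjointFr disjYX (subsetP sSY x xS)).
rewrite -(card_in_imset hinj).
case: (boolP ((e \in S) && (h e \notin Q))) => [/andP[eS heQ]|noe]; last first.
  apply: leq_trans (leq_addr _ _) ; apply: subset_leq_card.
  apply/subsetP => _ /imsetP[x xS ->]; case: (eqVneq x e) => [xe|]; last exact: outside.
  by move: noe; rewrite -xe xS negbK.
have -> : famAe A e (e |: X) != set0.
  by apply/set0Pn; exists (h e); move: heQ; rewrite !inE negbK => ->; apply: hA.
suff /subset_leq_card : h @: S \subset h e |: Q by rewrite cardsU1 heQ addnC.
apply/subsetP => _ /imsetP[x xS ->].
by case: (eqVneq x e) => [->|xe]; rewrite ?setU11 ?setU1r ?outside.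
Qed.

Definition alt_edge S h : rel 'I_r :=
  fun i k => [exists u in S, (u \in A i) && (h u == k)].

Lemma matching_update S h x j : matching S h -> x \in A j ->
  j \notin h @: (S :\ x) -> matching (x |: S) (fun z => if z == x then j else h z).
Proof.
move=> [hinj hA] xAj jfree.
have inS u : u \in x |: S -> u != x -> u \in S :\ x.
  by move=> /setU1P[->|uS] ux; [rewrite eqxx in ux | apply/setD1P].
have hj u : u \in x |: S -> u != x -> h u != j.
  by move=> uS ux; apply: contraNneq jfree => <-; rewrite imset_f ?inS.
split=> [y z yS zS|y yS]; last first.
  by case: eqVneq => [-> //|yx]; move: (inS y yS yx) => /setD1P[_ /hA].
case: eqVneq => [->|yx]; case: eqVneq => [->|zx] //.
- by move=> /esym/eqP; rewrite (negbTE (hj z zS zx)).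
- by move=> /eqP; rewrite (negbTE (hj y yS yx)).
by apply: hinj; [move: (inS y yS yx) | move: (inS z zS zx)] => /setD1P[].
Qed.

Lemma augmenting_path S h j p y : matching S h -> j \notin h @: S ->
  path (alt_edge S h) j p -> uniq (j :: p) -> y \in A (last j p) -> y \notin S ->
  exists g, matching (y |: S) g.
Proof.
elim: p h j => [|i p IH] h j mh jfree /=.
  move=> _ _ yA _; exists (fun z => if z == y then j else h z).
  by apply: matching_update => //; apply: contra jfree; apply/subsetP/imsetS/subD1set.
move=> /andP[/existsP[u /and3P[uS uAj /eqP hui]] pa] /andP[jNip uip] yA yS.
have iNp : i \notin p by case/andP: uip.
set g := fun z => if z == u then j else h z.
have mg : matching S g.
  have uSS : u |: S = S by apply/setUidPr; rewrite sub1set.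
  rewrite -{1}uSS; apply: matching_update mh uAj _.
  by apply: contra jfree; apply/subsetP/imsetS/subD1set.
apply: (IH g i) => //.
- apply/imsetP => -[z zS]; rewrite /g; case: (eqVneq z u) => [_ ij|zu hzi].
    by move: jNip; rewrite ij mem_head.
  by case/eqP: zu; apply: (mh.1) => //; rewrite hui.
- apply: (path_sub_target (P := predC1 i)) pa; last first.
    by apply/allP => b bp; apply: contraNneq iNp => <-.
  move=> a b bi /existsP[v /and3P[vS vA /eqP hvb]]; apply/existsP; exists v.
  rewrite vS vA /g; case: (eqVneq v u) => [vu|_] /=; last by rewrite hvb.
  by move: bi; rewrite /= -hvb vu hui eqxx.
Qed.

Lemma augmenting S h j i y : matching S h -> j \notin h @: S ->
  connect (alt_edge S h) j i -> y \in A i -> y \notin S -> exists g, matching (y |: S) g.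
Proof.
move=> mh jfree /connectP[p pa ->] yA yS.
case: (shortenP pa) yA => p' pa' uniq' _ yA.
exact: augmenting_path mh jfree pa' uniq' yA yS.
Qed.

Lemma matching_sub S U h : U \subset S -> matching S h -> matching U h.
Proof.
move=> /subsetP sUS [hinj hA]; split=> [x y /sUS xS /sUS yS|x /sUS]; last exact: hA.
exact: hinj.
Qed.

Lemma matching_glue U D h g : matching U h -> matching D g ->
  (forall x z, x \in U -> z \in D -> h x != g z) ->
  matching (U :|: D) (fun x => if x \in U then h x else g x).
Proof.
move=> [hinj hA] [ginj gA] hg.
have inD w : w \in U :|: D -> w \in U = false -> w \in D by case/setUP=> [->|].
split=> [x z xUD zUD|x xUD]; last by case: ifP => xU; [apply: hA | apply/gA/inD].
case: ifP => xU; case: ifP => zU.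
- exact: hinj.
- by move=> hxz; move: (hg x z xU (inD z zUD zU)); rewrite hxz eqxx.
- by move=> gxz; move: (hg z x zU (inD x xUD xU)); rewrite gxz eqxx.
- exact: ginj (inD x xUD xU) (inD z zUD zU).
Qed.

Section MaximumTransversal.
Variables (Y S : {set T}) (h : T -> 'I_r) (j : 'I_r).
Hypotheses (sSY : S \subset Y) (mh : matching S h).
Hypotheses (maxS : #|S| = mrank partial_transversalb Y) (jfree : j \notin h @: S).

Local Notation reach := (connect (alt_edge S h) j).

Lemma reach_matched i y : reach i -> y \in A i -> y \in Y ->
  y \in S /\ reach (h y).
Proof.
move=> ji yA yY; have yS : y \in S.
  apply: contraT => yS; have [g mg] := augmenting mh jfree ji yA yS.
  have : #|y |: S| <= mrank partial_transversalb Y.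
    by apply: mrank_ge; [rewrite subUset sub1set yY | apply/partial_transversalP; exists g].
  by rewrite -maxS cardsU1 yS ltnn.
split=> //; apply: connect_trans ji (connect1 _).
by apply/existsP; exists y; rewrite yS yA eqxx.
Qed.

Lemma reach_coloop i y : reach i -> y \in A i -> y \in Y ->
  mrank partial_transversalb (Y :\ y) < mrank partial_transversalb Y.
Proof.
move=> ji yA yY.
pose U := [set u in Y | [exists k, reach k && (u \in A k)]].
have inU u : (u \in U) = (u \in Y) && [exists k, reach k && (u \in A k)] by rewrite inE.
clearbody U.
have reachU u : u \in U -> u \in S /\ reach (h u).
  by rewrite inU => /andP[uY /existsP[k /andP[jk uA]]]; apply: reach_matched jk uA uY.
have yU : y \in U by rewrite inU yY; apply/existsP; exists i; rewrite ji yA.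
have [S' /andP[sS' /partial_transversalP[g mg]] <-] :=
  mrank_witness (Y :\ y) (partial_transversal0 (h y)).
have S'Y x : x \in S' -> x \in Y by move/(subsetP sS')/setD1P=> [].
(* Matching U by h and the rest of S' by g gives a partial transversal of Y, while S' has
   at most |U| - 1 elements in U. *)
pose D := [set x in S' :\: U | ~~ reach (g x)].
have inD x : (x \in D) = [&& x \notin U, x \in S' & ~~ reach (g x)].
  by rewrite !inE andbA.
clearbody D.
have sS'UD : S' \subset (S' :&: U) :|: D.
  apply/subsetP => x xS'; rewrite in_setU in_setI inD xS' /=.
  case xU: (x \in U) => //=; apply: contraFN xU => jgx.
  by rewrite inU S'Y //=; apply/existsP; exists (g x); rewrite jgx mg.2.
have card_UD : #|U| + #|D| <= #|S|.
  have disjUD : U :&: D = set0.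
    by apply/setP => x; rewrite in_setI inD in_set0; case: (x \in U).
  rewrite maxS -[#|U| + _]subn0 -(cards0 T) -disjUD -cardsU; apply: mrank_ge.
    rewrite subUset; apply/andP; split; apply/subsetP => x.
      by rewrite inU => /andP[].
    by rewrite inD => /and3P[_ /S'Y].
  apply/partial_transversalP; eexists; apply: matching_glue.
  - by apply: matching_sub mh; apply/subsetP => u /reachU[].
  - by apply: matching_sub mg; apply/subsetP => x; rewrite inD => /and3P[].
  move=> x z /reachU[_ jhx]; rewrite inD => /and3P[_ _ jgz].
  by apply: contraNneq jgz => <-.
have card_S'U : #|S' :&: U| < #|U|.
  rewrite (cardsD1 y U) yU ltnS; apply: subset_leq_card; apply/subsetP => x.
  case/setIP=> xS' xU; rewrite in_setD1 xU andbT.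
  by move/(subsetP sS')/setD1P: xS' => [].
have := subset_leq_card sS'UD; rewrite cardsU -maxS.
lia.
Qed.

End MaximumTransversal.

Lemma mrank_transversal_ge E X e : (forall i, A i \subset E) -> e \in E :\: X ->
  (forall y, y \in (E :\: X) :\ e ->
     mrank partial_transversalb (E :\: X) <= mrank partial_transversalb ((E :\: X) :\ y)) ->
  #|~: famA A (e |: X)| + (famAe A e (e |: X) != set0) <=
    mrank partial_transversalb (E :\: X).
Proof.
move=> sAE eY noncoloop.
(* Partial transversals are witnessed by total maps T -> 'I_r, so for r = 0 not even set0
   need be one; the bound is then 0 anyway. *)
have [i0 _|noI] := pickP (@predT 'I_r); last first.
  have emptyI (P : {set 'I_r}) : P = set0 by apply/setP => i; have := noI i.
  by rewrite (emptyI (~: _)) (emptyI (famAe _ _ _)) cards0 eqxx.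
have [S /andP[sSY /partial_transversalP[h mh]] maxS] :=
  mrank_witness (E :\: X) (partial_transversal0 i0).
have reach_famA j i : j \notin h @: S -> connect (alt_edge S h) j i -> A i \subset e |: X.
  move=> jfree ji; apply/subsetP => y yA; apply: contraT => yout.
  have yYe : y \in (E :\: X) :\ e.
    by move: yout; rewrite !inE negb_or (subsetP (sAE i) y yA) andbT.
  have := reach_coloop sSY mh maxS jfree ji yA (subsetP (subD1set _ e) y yYe).
  by rewrite ltnNge noncoloop.
have matched : ~: famA A (e |: X) \subset h @: S.
  apply/subsetP => j; rewrite in_setC inE; apply: contraR => jfree.
  exact: reach_famA jfree (connect0 _ _).
rewrite -maxS -(card_in_imset mh.1).
case: set0Pn => [[k]|_]; last by rewrite addn0 subset_leq_card.
rewrite inE => /andP[sAk eAk].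
suff [i iS iQ] : exists2 i, i \in h @: S & i \in famA A (e |: X).
  have : i |: ~: famA A (e |: X) \subset h @: S by rewrite subUset sub1set iS matched.
  by move/subset_leq_card; rewrite cardsU1 in_setC iQ addnC.
case: (boolP (k \in h @: S)) => [kS|kfree]; first by exists k; rewrite ?inE.
have [eS ke] := reach_matched sSY mh maxS kfree (connect0 _ k) eAk eY.
by exists (h e); rewrite ?imset_f // inE (reach_famA k).
Qed.

Lemma famA_setU1 X e : famA A (e |: X) = famA A X :|: famAe A e (e |: X).
Proof.
apply/setP => i; rewrite !inE; case eA: (e \in A i); rewrite ?andbT ?andbF ?orbF.
  by rewrite orb_idl // => /subset_trans; apply; apply: subsetUr.
apply/idP/idP => [/subsetP sA|sAX]; last exact: subset_trans sAX (subsetUr _ _).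
apply/subsetP => x xA; case/setU1P: (sA x xA) => [xe|//].
by move: eA; rewrite -xe xA.
Qed.

Lemma card_famA_setU1 X e : e \notin X ->
  #|~: famA A (e |: X)| + #|famA A X| + #|famAe A e (e |: X)| = r.
Proof.
move=> eX; have disjA : famA A X :&: famAe A e (e |: X) = set0.
  apply/setP => i; rewrite !inE; apply/negP => /and3P[sAX _ eA].
  by move: eX; rewrite (subsetP sAX e eA).
have := cardsC (famA A (e |: X)).
by rewrite famA_setU1 cardsU disjA cards0 subn0 card_ord; lia.
Qed.

End Transversal.

Theorem lemma3p2 (T : finType) (E : {set T}) (ind : {set T} -> bool)
  (r : nat) (A : 'I_r -> {set T}) (e : T) (X : {set T}) :
  matroid_axioms E ind ->
  (forall i, A i \subset E) ->
  (forall I, dual_indep E ind I <-> partial_transversal A I) ->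
  r = mrank (dual_indep E ind) E ->
  e \in E ->
  X \subset E :\ e ->
  (mrank (del_indep ind e) X + #|famA A X| + (#|famAe A e (e |: X)|).-1 <= #|X|)%N /\
  (cyclic_flat (E :\ e) (del_indep ind e) X ->
   (mrank (del_indep ind e) X + #|famA A X| + (#|famAe A e (e |: X)|).-1 = #|X|)%N).
Proof.
move=> matroidM sAE dualA rE eE sX.
have eX : e \notin X by apply/negP => /(subsetP sX); rewrite !inE eqxx.
have sXE : X \subset E := subset_trans sX (subsetDl _ _).
have rkA : mrank (dual_indep E ind) =1 mrank (partial_transversalb A).
  by apply: eq_mrank => I; apply/idP/partial_transversalP => /dualA.
have rkX := mrank_dual matroidM sXE; rewrite -rE rkA in rkX.
have cardA := card_famA_setU1 A eX.
have predn_card : #|famAe A e (e |: X)|.-1 + (famAe A e (e |: X) != set0) =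
                  #|famAe A e (e |: X)|.
  by rewrite -cards_eq0; case: #|_| => // n; rewrite addn1.
have disjYX : [disjoint E :\: X & X] by rewrite disjoints_subset setDE subsetIr.
have ub := mrank_transversal_le A e disjYX.
rewrite mrank_del //; split; first by lia.
case=> -[_ flatX] _.
have noncoloop y : y \in (E :\: X) :\ e -> mrank (partial_transversalb A) (E :\: X) <=
                                         mrank (partial_transversalb A) ((E :\: X) :\ y).
  case/setD1P=> ye /setDP[yE yX]; rewrite -!rkA.
  apply: mrank_dual_setD1 => //; first by rewrite inE yX.
  have eyX : e \notin y |: X by rewrite !inE negb_or eq_sym ye.
  by rewrite -(mrank_del _ eX) -(mrank_del _ eyX); apply: flatX; rewrite !inE ye yX yE.
have eY : e \in E :\: X by rewrite inE eX.
by have := mrank_transversal_ge sAE eY noncoloop; lia.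
Qed.
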